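(* Let $\sigma$ be a signature containing $\triangleright$ and let $\mathcal{A}$ be a $\sigma$-algebra. If $\mathcal{A}$ has a meet-complete representation by partial functions, then the atoms of $\mathcal{A}$ are separating: whenever $a \not\le b$ in $\mathcal{A}$ there is an atom $c$ of $\mathcal{A}$ with $c \le a$ and $c \not\le b$. In particular, $\mathcal{A}$ is atomic (every nonzero element lies above some atom).
   Context: Signatures $\sigma$ are sets of operation symbols drawn from: $\triangleright$ (antidomain restriction), $;$ (composition), $\wedge$ (intersection), $\mathrm{upd}$ (update), $\sqcup$ (preferential union), $\mathsf{D}$ (domain), $\mathsf{A}$ (antidomain), interpreted on partial functions as: $f \triangleright g = \{(x,y) \in g : x \notin \mathrm{dom}(f)\}$; $f;g$ = relational composition ($f$ first); $f\wedge g = f\cap g$; $\mathrm{upd}(f,g)(x)$ is $f(x)$ if $f(x)$ defined and $g(x)$ undefined, $g(x)$ if both defined, undefined otherwise; $(f\sqcup g)(x)$ is $f(x)$ if defined, else $g(x)$; $\mathsf{D}(f)$ = identity on $\mathrm{dom}(f)$; $\mathsf{A}(f)$ = identity on the complement of $\mathrm{dom}(f)$ in the base. A representation by partial functions is an isomorphism onto a $\sigma$-algebra of partial functions with these operations. Define $0 := a\triangleright a$, $a\lhd b := (a\triangleright b)\triangleright b$, $a \le b :\iff a\lhd b = a$; for representable algebras this is a partial order with least element $0$ and $a\le b\iff\theta(a)\subseteq\theta(b)$. An atom is a minimal nonzero element. A representation $\theta$ is meet complete if for every nonempty $S$ with $\bigwedge S$ existing in $(\mathcal{A},\le)$, $\theta(\bigwedge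 S)=\bigcap\theta[S]$. *)

Inductive sym : Type :=
  | s_arestr
  | s_comp
  | s_meet
  | s_upd
  | s_pref
  | s_dom
  | s_antidom.

Definition signature := sym -> Prop.

(* An algebra carrying (interpretations of) all the symbols; a sigma-algebra
   is one of these where only the symbols in sigma are relevant (the
   representation is required to preserve only those). *)
Record alg : Type := Alg {
  carrier :> Type;
  op_arestr : carrier -> carrier -> carrier;
  op_comp   : carrier -> carrier -> carrier;
  op_meet   : carrier -> carrier -> carrier;
  op_upd    : carrier -> carrier -> carrier;
  op_pref   : carrier -> carrier -> carrier;
  op_dom    : carrier -> carrier;
  op_antidom : carrier -> carrier
}.

Definition rel (X : Type) := X -> X -> Prop.

Definition is_pfun {X : Type} (f : rel X) : Prop :=
  forall x y z, f x y -> f x z -> y = z.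

Definition rdom {X : Type} (f : rel X) (x : X) : Prop := exists y, f x y.

Definition pf_arestr {X : Type} (f g : rel X) : rel X :=
  fun x y => g x y /\ ~ rdom f x.
Definition pf_comp {X : Type} (f g : rel X) : rel X :=
  fun x y => exists z, f x z /\ g z y.
Definition pf_meet {X : Type} (f g : rel X) : rel X :=
  fun x y => f x y /\ g x y.
Definition pf_upd {X : Type} (f g : rel X) : rel X :=
  fun x y => (f x y /\ ~ rdom g x) \/ (rdom f x /\ g x y).
Definition pf_pref {X : Type} (f g : rel X) : rel X :=
  fun x y => f x y \/ (~ rdom f x /\ g x y).
Definition pf_dom {X : Type} (f : rel X) : rel X :=
  fun x y => x = y /\ rdom f x.
Definition pf_antidom {X : Type} (f : rel X) : rel X :=
  fun x y => x = y /\ ~ rdom f x.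

Definition preserves {A : alg} {X : Type} (theta : A -> rel X) (s : sym) : Prop :=
  match s with
  | s_arestr => forall a b, theta (op_arestr A a b) = pf_arestr (theta a) (theta b)
  | s_comp   => forall a b, theta (op_comp A a b) = pf_comp (theta a) (theta b)
  | s_meet   => forall a b, theta (op_meet A a b) = pf_meet (theta a) (theta b)
  | s_upd    => forall a b, theta (op_upd A a b) = pf_upd (theta a) (theta b)
  | s_pref   => forall a b, theta (op_pref A a b) = pf_pref (theta a) (theta b)
  | s_dom    => forall a, theta (op_dom A a) = pf_dom (theta a)
  | s_antidom => forall a, theta (op_antidom A a) = pf_antidom (theta a)
  end.

Definition representation (sigma : signature) (A : alg) (X : Type)
  (theta : A -> rel X) : Prop :=
  (forall a, is_pfun (theta a)) /\
  (forall a b, theta a = theta b -> a = b) /\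
  (forall s, sigma s -> preserves theta s).

Definition ale {A : alg} (a b : A) : Prop := op_arestr A (op_arestr A a b) b = a.

(* a is the zero element 0 = a |> a  (0 := x |> x, independent of x). *)
Definition is_zero {A : alg} (a : A) : Prop := a = op_arestr A a a.

Definition atom {A : alg} (c : A) : Prop :=
  ~ is_zero c /\ forall d : A, ale d c -> is_zero d \/ d = c.

Definition is_glb {A : alg} (S : A -> Prop) (m : A) : Prop :=
  (forall s, S s -> ale m s) /\
  (forall l, (forall s, S s -> ale l s) -> ale l m).

Definition meet_complete {A : alg} {X : Type} (theta : A -> rel X) : Prop :=
  forall (S : A -> Prop) (m : A), (exists s, S s) -> is_glb S m ->
    forall x y, theta m x y <-> (forall s, S s -> theta s x y).

From Stdlib Require Import Classical FunctionalExtensionality PropExtensionality.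

(* Fix a representation theta of A by partial functions that
   preserves antidomain restriction.  Through theta the derived order <= is
   inclusion of partial functions and 0 = a |> a is the empty function, so
   atoms, zero and lower bounds can all be read off pointwise.

   Given a pair (x,y) in theta(a), consider the set S of all s <= a with
   (x,y) in theta(s).  Every lower bound l of S is either an atom of S
   (when (x,y) is in theta(l)) or zero (when it is not); both facts follow by
   testing l against elements of the form d |> l resp. l |> a, which lie in S.
   Hence if S contained no atom, 0 would be the meet of S, and meet
   completeness would put (x,y) into theta(0) = empty, which is absurd.  So
   some atom c <= a has (x,y) in theta(c); if a is not below b, choose (x,y)
   outside theta(b), and then c is not below b either.  Atomicity is the
   special case of a pair in the graph of a nonzero a. *)

Lemma rel_ext {X : Type} (f g : rel X) :
  (forall x y, f x y <-> g x y) -> f = g.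
Proof.
  intros H. apply functional_extensionality; intro x.
  apply functional_extensionality; intro y.
  apply propositional_extensionality; apply H.
Qed.

Section RepresentedOrder.

Variables (A : alg) (X : Type) (theta : A -> rel X).
Hypothesis theta_pfun : forall a, is_pfun (theta a).
Hypothesis theta_inj : forall a b, theta a = theta b -> a = b.
Hypothesis theta_arestr :
  forall a b, theta (op_arestr A a b) = pf_arestr (theta a) (theta b).

Local Notation "a |> b" := (op_arestr A a b) (at level 40, left associativity).

Lemma theta_arestr_iff (a b : A) (x y : X) :
  theta (a |> b) x y <-> theta b x y /\ ~ rdom (theta a) x.
Proof. rewrite theta_arestr. unfold pf_arestr. tauto. Qed.

Lemma ale_iff (a b : A) : ale a b <-> (forall x y, theta a x y -> theta b x y).
Proof.
  unfold ale. split.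
  - intros H x y Ha. rewrite <- H in Ha. apply theta_arestr_iff in Ha. tauto.
  - intros H. apply theta_inj, rel_ext. intros x y.
    rewrite theta_arestr_iff. split.
    + intros [Hb Hn].
      destruct (classic (rdom (theta a) x)) as [[w Hw] | Hnd].
      * rewrite (theta_pfun b x y w Hb (H _ _ Hw)). exact Hw.
      * exfalso. apply Hn. exists y. apply theta_arestr_iff. tauto.
    + intros Ha. split; [apply H, Ha |].
      intros [z Hz]. apply theta_arestr_iff in Hz.
      apply (proj2 Hz). exists y. exact Ha.
Qed.

Lemma zero_iff (a : A) : is_zero a <-> (forall x y, ~ theta a x y).
Proof.
  unfold is_zero. split.
  - intros H x y Ha. rewrite H, theta_arestr_iff in Ha.
    apply (proj2 Ha). exists y. apply Ha.
  - intros H. apply theta_inj, rel_ext. intros x y. rewrite theta_arestr_iff.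
    split; intros Hc; exfalso; apply (H x y); apply Hc.
Qed.

Lemma ale_trans (a b c : A) : ale a b -> ale b c -> ale a c.
Proof. rewrite !ale_iff. auto. Qed.

Lemma ale_antisym (a b : A) : ale a b -> ale b a -> a = b.
Proof.
  rewrite !ale_iff. intros Hab Hba.
  apply theta_inj, rel_ext. split; auto.
Qed.

Lemma arestr_self_zero (a : A) : is_zero (a |> a).
Proof.
  apply zero_iff. intros x y H. apply theta_arestr_iff in H.
  apply (proj2 H). exists y. apply H.
Qed.

Lemma zero_ale (z b : A) : is_zero z -> ale z b.
Proof. rewrite zero_iff, ale_iff. intros Hz x y H. exfalso. exact (Hz x y H). Qed.

Lemma arestr_ale (d e : A) : ale (d |> e) e.
Proof. apply ale_iff. intros x y H. apply theta_arestr_iff in H. apply H. Qed.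

(* d |> e is defined only off the domain of d, so d <= d |> e forces d = 0. *)
Lemma ale_arestr_zero (d e : A) : ale d (d |> e) -> is_zero d.
Proof.
  rewrite ale_iff, zero_iff. intros H x y Hd.
  apply (proj2 (proj1 (theta_arestr_iff d e x y) (H x y Hd))).
  exists y. exact Hd.
Qed.

Definition through (a : A) (x y : X) : A -> Prop :=
  fun s => ale s a /\ theta s x y.

Definition lower_bound (S : A -> Prop) (l : A) : Prop :=
  forall s, S s -> ale l s.

Section LowerBounds.

Variables (a : A) (x y : X).
Hypothesis a_xy : theta a x y.

Lemma through_self : through a x y a.
Proof. split; [apply ale_iff; auto | exact a_xy]. Qed.

(* A lower bound of [through a x y] passing through (x,y) is an atom:
   any d <= l either passes through (x,y), so l <= d, or misses x,
   so d |> l passes through (x,y) and l <= d |> l makes d zero. *)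
Lemma lower_bound_through_atom (l : A) :
  lower_bound (through a x y) l -> theta l x y -> atom l.
Proof.
  intros Hl Hlxy.
  assert (Hla : ale l a) by (apply Hl, through_self).
  split.
  - intro Hz. rewrite zero_iff in Hz. exact (Hz x y Hlxy).
  - intros d Hdl.
    destruct (classic (rdom (theta d) x)) as [[w Hw] | Hnd].
    + right.
      assert (Hw_y : w = y).
      { apply (theta_pfun l x w y); [| exact Hlxy].
        exact (proj1 (ale_iff d l) Hdl x w Hw). }
      subst w.
      apply ale_antisym; [exact Hdl |].
      apply Hl. split; [exact (ale_trans _ _ _ Hdl Hla) | exact Hw].
    + left.
      apply ale_arestr_zero with l, ale_trans with l; [exact Hdl |].
      apply Hl. split.
      * exact (ale_trans _ _ _ (arestr_ale d l) Hla).
      * apply theta_arestr_iff. tauto.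
Qed.

(* A lower bound missing (x,y) misses x entirely (it lies below the partial
   function a), so l |> a belongs to the set and l <= l |> a makes l zero. *)
Lemma lower_bound_avoiding_zero (l : A) :
  lower_bound (through a x y) l -> ~ theta l x y -> is_zero l.
Proof.
  intros Hl Hlxy.
  assert (Hla : ale l a) by (apply Hl, through_self).
  assert (Hnd : ~ rdom (theta l) x).
  { intros [w Hw]. apply Hlxy.
    rewrite (theta_pfun a x y w a_xy (proj1 (ale_iff l a) Hla _ _ Hw)). exact Hw. }
  apply ale_arestr_zero with a, Hl. split.
  - apply arestr_ale.
  - apply theta_arestr_iff. tauto.
Qed.

(* If no atom below a passes through (x,y), then 0 is the meet of
   [through a x y], since all its lower bounds are zero. *)
Lemma through_glb_zero :
  ~ (exists c, atom c /\ ale c a /\ theta c x y) ->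
  is_glb (through a x y) (a |> a).
Proof.
  intros Hno. split.
  - intros s _. apply zero_ale, arestr_self_zero.
  - intros l Hl. apply zero_ale.
    destruct (classic (theta l x y)) as [Hlxy | Hlxy].
    + exfalso. apply Hno. exists l.
      split; [apply lower_bound_through_atom |]; auto using through_self.
    + exact (lower_bound_avoiding_zero l Hl Hlxy).
Qed.

Lemma atom_through_pair :
  meet_complete theta -> exists c, atom c /\ ale c a /\ theta c x y.
Proof.
  intros Hmc. apply NNPP. intro Hno.
  assert (Hmeet : theta (a |> a) x y).
  { apply (Hmc (through a x y)).
    - exists a. apply through_self.
    - exact (through_glb_zero Hno).
    - intros s Hs. apply Hs. }
  exact (proj1 (zero_iff _) (arestr_self_zero a) x y Hmeet).
Qed.

End LowerBounds.

End RepresentedOrder.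

Theorem corollary4p5 (sigma : signature) (A : alg) :
  sigma s_arestr ->
  (exists (X : Type) (theta : A -> rel X),
      representation sigma A X theta /\ meet_complete theta) ->
  (forall a b : A, ~ ale a b ->
     exists c : A, atom c /\ ale c a /\ ~ ale c b) /\
  (forall a : A, ~ is_zero a -> exists c : A, atom c /\ ale c a).
Proof.
  intros Hs [X [theta [[Hpf [Hinj Hpres]] Hmc]]].
  pose proof (Hpres s_arestr Hs) as Har. simpl in Har.
  split.
  - intros a b Hab.
    rewrite (ale_iff A X theta Hpf Hinj Har) in Hab.
    apply not_all_ex_not in Hab as [x Hab].
    apply not_all_ex_not in Hab as [y Hab].
    apply imply_to_and in Hab as [Hxa Hxb].
    destruct (atom_through_pair A X theta Hpf Hinj Har a x y Hxa Hmc)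
      as [c [Hc [Hca Hcxy]]].
    exists c. split; [exact Hc | split; [exact Hca |]].
    rewrite (ale_iff A X theta Hpf Hinj Har). intro Hcb. exact (Hxb (Hcb x y Hcxy)).
  - intros a Ha.
    rewrite (zero_iff A X theta Hinj Har) in Ha.
    apply not_all_ex_not in Ha as [x Ha].
    apply not_all_ex_not in Ha as [y Hxa].
    apply NNPP in Hxa.
    destruct (atom_through_pair A X theta Hpf Hinj Har a x y Hxa Hmc)
      as [c [Hc [Hca _]]].
    exists c. auto.
Qed.
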